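(* Let $G$ be a graph that has a compatible tree-representation $\{T(v)\}$. Then $G$ has a simple vertex. Furthermore, any vertex $v$ that maximizes the depth of the root of $T(v)$ (among all vertices of $G$) is a simple vertex.
   Context: Graphs are finite and simple; $N[v]$ denotes the closed neighbourhood of $v$. A host tree $T$ is a rooted tree whose arcs carry positive integer weights; the depth of a node is the sum of arc weights on its path to the root. A subtree is a connected node set of $T$; its root is its node of smallest depth. A tree-representation of $G$ assigns to each vertex $v$ a subtree $T(v)$ of $T$ such that for distinct $v,w$, $(v,w)$ is an edge iff $T(v)\cap T(w)\neq\emptyset$. For subtrees $T_1,T_2$, $T_1$ overshadows $T_2$ if every node of $T_2\setminus T_1$ has depth strictly greater than every node of $T_2\cap T_1$. A tree-representation is compatible if for every two vertices $v,w$, $T(v)$ overshadows $T(w)$ or $T(w)$ overshadows $T(v)$. A vertex $v$ is simple if $N[v]$ can be ordered as $u_1,\dots,u_d$ with $N[u_1]\subseteq\dots\subseteq N[u_d]$. *)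

From mathcomp Require Import all_boot.
Set Implicit Arguments. Unset Strict Implicit. Unset Printing Implicit Defensive.

Definition simple_graph (V : finType) (e : rel V) : Prop :=
  symmetric e /\ irreflexive e.

Definition cnbhd (V : finType) (e : rel V) (v : V) : {set V} :=
  [set u | (u == v) || e v u].

Definition simple_vertex (V : finType) (e : rel V) (v : V) : Prop :=
  exists s : seq V, perm_eq s (enum (cnbhd e v)) /\
    sorted (fun a b => cnbhd e a \subset cnbhd e b) s.

(** Host tree: finite node type N, root r, parent map par (with par r = r,
    every node reaching r by iterating par), and positive integer weights
    w x on the arc (par x, x) for x <> r. *)
Record host_tree (N : finType) := HostTree {
  ht_root : N;
  ht_par : N -> N;
  ht_w : N -> nat;
  ht_par_root : ht_par ht_root = ht_root;
  ht_rooted : forall x, iter #|N| ht_par x = ht_root;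
  ht_w_pos : forall x, x != ht_root -> 0 < ht_w x
}.

Fixpoint depth_fuel (N : finType) (T : host_tree N) (k : nat) (x : N) : nat :=
  match k with
  | 0 => 0
  | k'.+1 => if x == ht_root T then 0 else ht_w T x + depth_fuel T k' (ht_par T x)
  end.

Definition depth (N : finType) (T : host_tree N) (x : N) : nat :=
  depth_fuel T #|N| x.

Definition tree_adj (N : finType) (T : host_tree N) : rel N :=
  fun x y => ((ht_par T x == y) && (x != ht_root T)) ||
             ((ht_par T y == x) && (y != ht_root T)).

Definition subtree (N : finType) (T : host_tree N) (S : {set N}) : Prop :=
  S != set0 /\
  forall x y, x \in S -> y \in S ->
    connect (fun a b => [&& a \in S, b \in S & tree_adj T a b]) x y.

Definition is_subroot (N : finType) (T : host_tree N) (S : {set N}) (x : N) : Prop :=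
  x \in S /\ forall y, y \in S -> depth T x <= depth T y.

Definition overshadows (N : finType) (T : host_tree N) (T1 T2 : {set N}) : Prop :=
  forall x y, x \in T2 :\: T1 -> y \in T2 :&: T1 -> depth T y < depth T x.

Definition tree_rep (V N : finType) (e : rel V) (T : host_tree N)
    (R : V -> {set N}) : Prop :=
  (forall v, subtree T (R v)) /\
  (forall v w, v != w -> e v w = (R v :&: R w != set0)).

Definition compatible (V N : finType) (T : host_tree N) (R : V -> {set N}) : Prop :=
  forall v w, overshadows T (R v) (R w) \/ overshadows T (R w) (R v).

Definition maximizes_root_depth (V N : finType) (T : host_tree N)
    (R : V -> {set N}) (v : V) : Prop :=
  forall u x y, is_subroot T (R u) x -> is_subroot T (R v) y -> depth T x <= depth T y.

From mathcomp Require Import all_boot.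
Set Implicit Arguments. Unset Strict Implicit. Unset Printing Implicit Defensive.

(* Let v maximise the depth of the root r of T(v). Any two intersecting
   subtrees each contain the deeper of the two roots, so r lies in T(u) for
   every u in N[v]. If T(u) overshadows T(w) for u, w in N[v], then every
   neighbour z of w meets T(w) in a node no deeper than r (the deeper of the
   roots of T(z) and T(w)); since r is in T(u) :&: T(w), overshadowing puts
   that node in T(u), so N[w] \subset N[u]. By compatibility the closed
   neighbourhoods of N[v] are thus totally ordered by inclusion, and sorting
   N[v] along this order shows that v is simple. *)

Section HostTree.

Variables (N : finType) (T : host_tree N).

Local Notation par := (ht_par T).
Local Notation root := (ht_root T).

Lemma depth_fuel_stable k m x :
  iter k par x = root -> k <= m -> depth_fuel T m x = depth_fuel T k x.
Proof.
elim: k x m => [|k IHk] x [|m] //=.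
- by move=> -> _; rewrite eqxx.
- move=> reach_root le_km; case: eqP => // _.
  by rewrite (IHk (par x)) // -iterSr.
Qed.

Lemma depth_par x : x != root -> depth T x = ht_w T x + depth T (par x).
Proof.
move=> x_nroot; rewrite /depth.
have := ht_rooted T x; have : 0 < #|N| by apply/card_gt0P; exists x.
case: #|N| => [|n] // _ reach_root.
rewrite [depth_fuel _ n.+1 x]/= (negbTE x_nroot).
by rewrite (@depth_fuel_stable n n.+1) // -iterSr.
Qed.

Lemma depth_par_lt x : x != root -> depth T (par x) < depth T x.
Proof.
move=> x_nroot.
by rewrite (depth_par x_nroot) -{1}[depth T (par x)]add0n ltn_add2r ht_w_pos.
Qed.

Lemma iter_par_root k : iter k par root = root.
Proof. by elim: k => //= k ->; rewrite ht_par_root. Qed.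

Lemma depth_iter_par_le k x : depth T (iter k par x) <= depth T x.
Proof.
elim: k x => // k IHk x; rewrite iterSr.
have [->|x_nroot] := eqVneq x root; first by rewrite ht_par_root iter_par_root.
exact: leq_trans (IHk _) (ltnW (depth_par_lt x_nroot)).
Qed.

Lemma depth_iter_par_lt k x :
  iter k par x != x -> depth T (iter k par x) < depth T x.
Proof.
case: k => [|k]; first by rewrite eqxx.
have [->|x_nroot] := eqVneq x root; first by rewrite iter_par_root eqxx.
rewrite iterSr => _.
exact: leq_ltn_trans (depth_iter_par_le _ _) (depth_par_lt x_nroot).
Qed.

Lemma exists_subroot S : subtree T S -> exists x, is_subroot T S x.
Proof.
case=> /set0Pn[x0 x0S] _.
by have [x xS x_min] := arg_minnP (depth T) x0S; exists x.
Qed.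

Lemma subroot_depth S x y :
  is_subroot T S x -> is_subroot T S y -> depth T x = depth T y.
Proof.
by move=> [xS x_min] [yS y_min]; apply/eqP; rewrite eqn_leq x_min ?y_min.
Qed.

(* The walk inside S from y to its root x may go down as well as up; a
   downward step out of x itself is impossible because x has minimal depth. *)
Lemma subroot_ancestor S x y :
  subtree T S -> is_subroot T S x -> y \in S ->
  exists n, iter n par y = x /\ forall i, i <= n -> iter i par y \in S.
Proof.
move=> [_ S_conn] [xS x_min] yS; have /connectP[p] := S_conn y x yS xS.
elim: p y yS => [|z p IHp] y yS /=.
  by move=> _ ->; exists 0; split=> // i; rewrite leqn0 => /eqP->.
case/andP=> /and3P[_ zS /orP[] /andP[/eqP par_z z_nroot]] z_path x_last.
  have [n [iter_n in_S]] := IHp z zS z_path x_last.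
  exists n.+1; split; first by rewrite iterSr par_z.
  by case=> [|i] //; rewrite ltnS iterSr par_z; apply: in_S.
have [[|n] [iter_n in_S]] := IHp z zS z_path x_last.
  by move: (x_min y yS); rewrite -iter_n -par_z leqNgt depth_par_lt.
exists n; split; first by rewrite -iter_n iterSr par_z.
by move=> i le_in; rewrite -par_z -iterSr; apply: in_S.
Qed.

Lemma subroot_mem_meet S1 S2 x1 x2 y :
  subtree T S1 -> subtree T S2 -> is_subroot T S1 x1 -> is_subroot T S2 x2 ->
  y \in S1 -> y \in S2 -> depth T x1 <= depth T x2 -> x2 \in S1.
Proof.
move=> S1_tree S2_tree x1_root x2_root yS1 yS2 le_x1x2.
have [n1 [iter_n1 in_S1]] := subroot_ancestor S1_tree x1_root yS1.
have [n2 [iter_n2 _]] := subroot_ancestor S2_tree x2_root yS2.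
have [le_n2n1|lt_n1n2] := leqP n2 n1; first by rewrite -iter_n2 in_S1.
have [<-|x1_neq_x2] := eqVneq x1 x2; first by case: x1_root.
have x2_above_x1 : iter (n2 - n1) par x1 = x2.
  by rewrite -iter_n1 -iter_n2 -iterD subnK // ltnW.
have := depth_iter_par_lt (k := n2 - n1) (x := x1).
by rewrite x2_above_x1 eq_sym x1_neq_x2 ltnNge le_x1x2 => /(_ isT).
Qed.

Lemma overshadows_mem S1 S2 x y :
  overshadows T S1 S2 -> y \in S2 :&: S1 -> x \in S2 ->
  depth T x <= depth T y -> x \in S1.
Proof.
move=> S1_over y_meet xS2 le_xy; apply/negPn/negP => xNS1.
have := S1_over x y; rewrite inE xNS1 xS2 => /(_ isT y_meet).
by rewrite ltnNge le_xy.
Qed.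

Lemma exists_max_root_depth (V : finType) (R : V -> {set N}) :
  (forall u, subtree T (R u)) -> 0 < #|V| ->
  exists v, maximizes_root_depth T R v.
Proof.
move=> R_tree /card_gt0P[v0 _].
have [root root_spec] := fin_all_exists (fun u => exists_subroot (R_tree u)).
have [v _ v_max] := arg_maxnP (fun u => depth T (root u)) (isT : predT v0).
exists v => u x y x_root y_root.
rewrite (subroot_depth x_root (root_spec u)).
rewrite (subroot_depth y_root (root_spec v)).
exact: v_max.
Qed.

End HostTree.

Lemma simple_vertex_of_total_cnbhd (V : finType) (e : rel V) v :
  {in cnbhd e v &, total (fun a b => cnbhd e a \subset cnbhd e b)} ->
  simple_vertex e v.
Proof.
move=> cnbhd_total.
exists (sort (fun a b => cnbhd e a \subset cnbhd e b) (enum (cnbhd e v))).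
split; first by rewrite perm_sort.
by apply: (sort_sorted_in cnbhd_total); apply/allP => x; rewrite mem_enum.
Qed.

Section Representation.

Variables (V N : finType) (e : rel V) (T : host_tree N) (R : V -> {set N}).
Hypothesis rep : tree_rep e T R.

Section MaxRootDepth.

Variables (v : V) (r : N).
Hypotheses (v_max : maximizes_root_depth T R v) (r_root : is_subroot T (R v) r).

Lemma subroot_mem_cnbhd u : u \in cnbhd e v -> r \in R u.
Proof.
have [R_tree R_meet] := rep; rewrite inE.
have [->|u_neq_v] := eqVneq u v; first by case: r_root.
have v_neq_u : v != u by rewrite eq_sym.
rewrite /= (R_meet _ _ v_neq_u) => /set0Pn[y]; rewrite inE => /andP[yRv yRu].
have [ru ru_root] := exists_subroot (R_tree u).
exact: subroot_mem_meet (R_tree u) (R_tree v) ru_root r_root yRu yRv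
  (v_max ru_root r_root).
Qed.

Lemma cnbhd_subset_of_overshadows u w :
  u \in cnbhd e v -> w \in cnbhd e v -> overshadows T (R u) (R w) ->
  cnbhd e w \subset cnbhd e u.
Proof.
move=> u_nb w_nb u_over; have [R_tree R_meet] := rep.
have r_meet : r \in R w :&: R u by rewrite inE !subroot_mem_cnbhd.
have shallow_Ru x : x \in R w -> depth T x <= depth T r -> x \in R u.
  exact: overshadows_mem u_over r_meet.
have [rw rw_root] := exists_subroot (R_tree w).
have rwRu : rw \in R u.
  have /setIP[rRw _] := r_meet.
  by case: rw_root => rwRw rw_min; rewrite shallow_Ru ?rw_min.
apply/subsetP => z; rewrite !inE.
have [//|z_neq_u] := eqVneq z u; have u_neq_z : u != z by rewrite eq_sym.
rewrite /= (R_meet _ _ u_neq_z); have [->|z_neq_w] := eqVneq z w.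
  by move=> _; apply/set0Pn; exists r; rewrite setIC.
have w_neq_z : w != z by rewrite eq_sym.
rewrite (R_meet _ _ w_neq_z) => /set0Pn[y]; rewrite inE => /andP[yRw yRz].
have [rz rz_root] := exists_subroot (R_tree z).
apply/set0Pn; have [le_rz_rw|lt_rw_rz] := leqP (depth T rz) (depth T rw).
  exists rw; rewrite inE rwRu.
  exact: subroot_mem_meet (R_tree z) (R_tree w) rz_root rw_root yRz yRw
    le_rz_rw.
exists rz; rewrite inE (proj1 rz_root) andbT.
rewrite shallow_Ru ?(v_max rz_root r_root) //.
exact: subroot_mem_meet (R_tree w) (R_tree z) rw_root rz_root yRw yRz
  (ltnW lt_rw_rz).
Qed.

End MaxRootDepth.

Lemma simple_vertex_of_max_root_depth v :
  compatible T R -> maximizes_root_depth T R v -> simple_vertex e v.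
Proof.
move=> compat v_max; have [r r_root] := exists_subroot (proj1 rep v).
apply: simple_vertex_of_total_cnbhd => a b a_nb b_nb.
have [a_over|b_over] := compat a b.
  by rewrite (cnbhd_subset_of_overshadows v_max r_root a_nb b_nb a_over) orbT.
by rewrite (cnbhd_subset_of_overshadows v_max r_root b_nb a_nb b_over).
Qed.

End Representation.

Theorem lemma2 (V N : finType) (e : rel V) (T : host_tree N) (R : V -> {set N}) :
  simple_graph e -> 0 < #|V| ->
  tree_rep e T R -> compatible T R ->
  (exists v : V, simple_vertex e v) /\
  (forall v : V, maximizes_root_depth T R v -> simple_vertex e v).
Proof.
move=> _ V_gt0 rep compat.
have max_simple v : maximizes_root_depth T R v -> simple_vertex e v.
  exact: simple_vertex_of_max_root_depth.
have [v v_max] := exists_max_root_depth (proj1 rep) V_gt0.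
by split=> [|//]; exists v; apply: max_simple.
Qed.
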